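(* Let $m$ be an integer and $\alpha\in(\frac12,\frac23)$. For an integer $N\ge 2$ let $v=e^{\pi i/N}$, $q^{1/8}=e^{\pi i/(4N)}$ (so $q^{mj^2/8}=\exp(\pi i m j^2/(4N))$), $\{n\}=v^n-v^{-n}$, $A(j,k)=\{j-k\}\{j+k\}$, $S(k,l)=\prod_{k\le n\le l}\{n\}$, and for $0\le l<j<N/2$ $$D_1(j,l)=\Big(\frac{mj}{2}+\frac{v^j+v^{-j}}{\{j\}}+2\{2j\}\sum_{k=1}^l\frac{1}{A(j,k)}\Big)S(j-l,j+l).$$ Let $F_N=\big(\prod_{r=1}^{\lfloor 5N/6\rfloor}2\sin\frac{r\pi}{N}\big)\big/\big(\prod_{r=1}^{\lfloor N/6\rfloor-1}2\sin\frac{r\pi}{N}\big)$. Then, as $N\to\infty$, $$\sum_{\substack{1\le j\le N/2-1\\ N-j+1\ \text{even}}}\ \sum_{l=0}^{j-1} q^{mj^2/8}D_1(j,l) = O\big(N^{3\alpha}F_N\big).$$ *)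

From Stdlib Require Import Reals ZArith List Lra.
From Coquelicot Require Import Coquelicot.
Open Scope R_scope.

Definition cexpi (t : R) : C := (cos t, sin t).

Definition vpow (N : nat) (n : Z) : C := cexpi (PI * IZR n / INR N).

Definition brace (N : nat) (n : Z) : C := Cminus (vpow N n) (vpow N (- n)).

Definition Afun (N : nat) (j k : Z) : C :=
  Cmult (brace N (j - k)) (brace N (j + k)).

(* integer range a, a+1, ..., b (empty if b < a) *)
Definition Zrange (a b : Z) : list Z :=
  map (fun i => (a + Z.of_nat i)%Z) (seq 0 (Z.to_nat (b - a + 1))).

Definition Csum_range (a b : Z) (f : Z -> C) : C :=
  fold_right Cplus (RtoC 0) (map f (Zrange a b)).

Definition Cprod_range (a b : Z) (f : Z -> C) : C :=
  fold_right Cmult (RtoC 1) (map f (Zrange a b)).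

Definition Sfun (N : nat) (k l : Z) : C := Cprod_range k l (brace N).

Definition D1 (N : nat) (m j l : Z) : C :=
  Cmult
    (Cplus
       (Cplus (RtoC (IZR m * IZR j / 2))
              (Cdiv (Cplus (vpow N j) (vpow N (- j))) (brace N j)))
       (Cmult (Cmult (RtoC 2) (brace N (2 * j)))
              (Csum_range 1 l (fun k => Cinv (Afun N j k)))))
    (Sfun N (j - l) (j + l)).

Definition qpow (N : nat) (m j : Z) : C :=
  cexpi (PI * IZR m * IZR (j * j) / (4 * INR N)).

(* The double sum: 1 <= j <= N/2 - 1 (i.e. j <= floor(N/2) - 1), N-j+1 even,
   0 <= l <= j-1. *)
Definition LHS (N : nat) (m : Z) : C :=
  Csum_range 1 (Z.of_nat N / 2 - 1)
    (fun j => if Z.even (Z.of_nat N - j + 1)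
              then Csum_range 0 (j - 1) (fun l => Cmult (qpow N m j) (D1 N m j l))
              else RtoC 0).

Definition sinprod (N b : nat) : R :=
  fold_right Rmult 1 (map (fun r => 2 * sin (INR r * PI / INR N)) (seq 1 b)).

(* F_N ; note floor(N/6)-1 truncated at 0 gives the empty product when N < 6 *)
Definition FN (N : nat) : R := sinprod N ((5 * N) / 6) / sinprod N (N / 6 - 1).

(* For [l < j < N/2] every bracket {n} is [i * 2 sin(n pi/N)], so that
   [q^(m j^2/8) D_1(j, l)] is a unimodular factor times
   [(-1)^l t_l (cot(j pi/N) + 2 {2j}/i h_l + i m j/2)], where [t_l = |S(j-l, j+l)|] and
   [h_l = sum_(k <= l) 1/|A(j,k)|].  The ratios [t_(l+1)/t_l = |A(j,l+1)|] decrease with [l],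
   so [t_l] and [t_l h_l] are unimodal in [l], and an alternating sum of a unimodal sequence is
   bounded by its maximum: the sum over [l] is [O(N max_l t_l)].  Each [t_l] is a product of
   consecutive chords [2 sin(r pi/N)], hence at most the product of all chords [>= 1], which is
   [O(F_N)]; comparing factor by factor with the central [j = N/2] improves this to
   [O(F_N (N/(N + (N/2 - j)^2) + 64^(-N/48)))].  Summing over [j] gives [O(N^(3/2) F_N)], and
   [N^(3/2) <= N^(3 alpha)]. *)

From Stdlib Require Import Reals ZArith List Lra Lia.
From Coquelicot Require Import Coquelicot.
Open Scope R_scope.

Fixpoint rsum (F : nat -> R) (n : nat) : R :=
  match n with O => 0 | S k => rsum F k + F k end.

Lemma rsum_le (F G : nat -> R) n :
  (forall i, (i < n)%nat -> F i <= G i) -> rsum F n <= rsum G n.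
Proof.
  induction n; simpl; intros H; [lra|].
  assert (F n <= G n) by (apply H; lia).
  assert (rsum F n <= rsum G n) by (apply IHn; intros; apply H; lia). lra.
Qed.

Lemma rsum_plus (F G : nat -> R) n : rsum (fun i => F i + G i) n = rsum F n + rsum G n.
Proof. induction n; simpl; [ring| rewrite IHn; ring]. Qed.

Lemma rsum_scal (c : R) (F : nat -> R) n : rsum (fun i => c * F i) n = c * rsum F n.
Proof. induction n; simpl; [ring| rewrite IHn; ring]. Qed.

Lemma rsum_const (c : R) n : rsum (fun _ => c) n = INR n * c.
Proof. induction n; simpl rsum; [simpl; ring| rewrite IHn, S_INR; ring]. Qed.

Lemma rsum_telescope (phi : nat -> R) n : rsum (fun i => phi (S i) - phi i) n = phi n - phi O.
Proof. induction n; simpl; [ring| rewrite IHn; ring]. Qed.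

Lemma fold_Rplus_seq (F : nat -> R) n : fold_right Rplus 0 (map F (seq 0 n)) = rsum F n.
Proof.
  assert (Hacc : forall (l : list R) x, fold_right Rplus x l = fold_right Rplus 0 l + x).
  { induction l; simpl; intros; [lra| rewrite IHl; lra]. }
  induction n; [reflexivity|].
  rewrite seq_S, map_app, fold_right_app; simpl. rewrite Hacc, IHn. lra.
Qed.

Definition prodR {A} (F : A -> R) (s : list A) : R := fold_right Rmult 1 (map F s).

Lemma prodR_app {A} (F : A -> R) s1 s2 : prodR F (s1 ++ s2) = prodR F s1 * prodR F s2.
Proof. induction s1; unfold prodR in *; simpl; [ring| rewrite IHs1; ring]. Qed.

Lemma prodR_ext_in {A} (F G : A -> R) s :
  (forall x, In x s -> F x = G x) -> prodR F s = prodR G s.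
Proof. intros H. unfold prodR. f_equal. apply map_ext_in, H. Qed.

Lemma prodR_pos {A} (F : A -> R) s : (forall x, In x s -> 0 < F x) -> 0 < prodR F s.
Proof.
  induction s; unfold prodR in *; simpl; intros H; [lra|].
  apply Rmult_lt_0_compat; [apply H|apply IHs]; auto.
Qed.

Lemma prodR_ge1 {A} (F : A -> R) s : (forall x, In x s -> 1 <= F x) -> 1 <= prodR F s.
Proof.
  induction s; unfold prodR in *; simpl; intros H; [lra|].
  assert (1 <= F a) by auto. assert (1 <= fold_right Rmult 1 (map F s)) by auto. nra.
Qed.

Lemma prodR_nonneg {A} (F : A -> R) s : (forall x, In x s -> 0 <= F x) -> 0 <= prodR F s.
Proof.
  induction s; unfold prodR in *; simpl; intros H; [lra|].
  apply Rmult_le_pos; [apply H|apply IHs]; auto.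
Qed.

Lemma prodR_le {A} (F G : A -> R) s :
  (forall x, In x s -> 0 <= F x <= G x) -> prodR F s <= prodR G s.
Proof.
  induction s; unfold prodR; simpl; intros H; [lra|].
  apply Rmult_le_compat; try apply H; auto.
  apply prodR_nonneg. intros x Hx. apply H; auto.
Qed.

Lemma seq_split3 b m n k : seq b (m + n + k) = seq b m ++ seq (b + m) n ++ seq (b + m + n) k.
Proof. rewrite !seq_app, app_assoc, Nat.add_assoc. reflexivity. Qed.

Lemma prodR_one {A} (F : A -> R) s : (forall x, In x s -> F x = 1) -> prodR F s = 1.
Proof. induction s; unfold prodR in *; simpl; intros H; [lra|]. rewrite H, IHs; auto; lra. Qed.

Lemma prodR_seq_le_superseq (G : nat -> R) b L a len : (b <= a)%nat -> (a + len <= b + L)%nat ->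
  (forall r, (b <= r < b + L)%nat -> 1 <= G r) -> prodR G (seq a len) <= prodR G (seq b L).
Proof.
  intros Hba Hlen HG.
  replace L with ((a - b) + len + (b + L - a - len))%nat by lia.
  rewrite seq_split3, !prodR_app. replace (b + (a - b))%nat with a by lia.
  assert (1 <= prodR G (seq b (a - b)))
    by (apply prodR_ge1; intros r Hr; apply in_seq in Hr; apply HG; lia).
  assert (1 <= prodR G (seq (a + len) (b + L - a - len)))
    by (apply prodR_ge1; intros r Hr; apply in_seq in Hr; apply HG; lia).
  assert (1 <= prodR G (seq a len))
    by (apply prodR_ge1; intros r Hr; apply in_seq in Hr; apply HG; lia).
  set (X := prodR G (seq b (a - b))) in *. set (Y := prodR G (seq a len)) in *.
  set (Z := prodR G (seq (a + len) _)) in *.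
  assert (Y <= Y * Z) by nra. assert (Y * Z <= X * (Y * Z)) by nra. lra.
Qed.

(* Passing from [g] to [max 1 g] only increases the left-hand side, after which the factors
   outside [seq a len] are harmless and those outside the window (lo, hi] equal 1. *)
Lemma prodR_seq_le_window (g : nat -> R) M lo hi a len :
  (1 <= a)%nat -> (a + len <= M)%nat -> (lo <= hi < M)%nat ->
  (forall r, (1 <= r < M)%nat -> 0 <= g r) ->
  (forall r, (lo < r <= hi)%nat -> 1 <= g r) ->
  (forall r, (1 <= r < M)%nat -> (r <= lo \/ hi < r)%nat -> g r <= 1) ->
  prodR g (seq a len) <= prodR g (seq (S lo) (hi - lo)).
Proof.
  intros Ha Hlen Hwin Hpos Hin Hout. set (G := fun r => Rmax 1 (g r)).
  apply Rle_trans with (prodR G (seq a len)).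
  { apply prodR_le. intros r Hr. apply in_seq in Hr.
    split; [apply Hpos; lia| apply Rmax_r]. }
  apply Rle_trans with (prodR G (seq 1 (M - 1))).
  { apply prodR_seq_le_superseq; try lia. intros r _. apply Rmax_l. }
  right. replace (M - 1)%nat with (lo + (hi - lo) + (M - 1 - hi))%nat by lia.
  rewrite seq_split3, !prodR_app.
  rewrite (prodR_one G (seq 1 lo)), (prodR_one G (seq (1 + lo + (hi - lo)) _)).
  - replace (1 + lo)%nat with (S lo) by lia. rewrite Rmult_1_l, Rmult_1_r.
    apply prodR_ext_in. intros r Hr. apply in_seq in Hr. apply Rmax_right, Hin. lia.
  - intros r Hr. apply in_seq in Hr. apply Rmax_left, Hout; lia.
  - intros r Hr. apply in_seq in Hr. apply Rmax_left, Hout; lia.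
Qed.

(** * Alternating sums of unimodal sequences *)
Definition alt (b : nat -> R) (n : nat) : R := rsum (fun l => (-1) ^ l * b l) n.

Lemma alt_cons (b : nat -> R) n : alt b (S n) = b O - alt (fun i => b (S i)) n.
Proof.
  unfold alt; induction n; [simpl; ring|].
  change (rsum (fun l => (-1) ^ l * b l) (S (S n)))
    with (rsum (fun l => (-1) ^ l * b l) (S n) + (-1) ^ S n * b (S n)).
  rewrite IHn. simpl. ring.
Qed.

Lemma alt_nonincreasing n (b : nat -> R) :
  (forall l, (l <= n)%nat -> 0 <= b l) -> (forall l, (l < n)%nat -> b (S l) <= b l) ->
  0 <= alt b (S n) <= b O.
Proof.
  revert b; induction n; intros b Hpos Hdec.
  - unfold alt; simpl. specialize (Hpos O (le_n _)). lra.
  - rewrite alt_cons.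
    destruct (IHn (fun i => b (S i))) as [H1 H2];
      [intros; apply Hpos; lia| intros; apply Hdec; lia|].
    assert (b 1%nat <= b O) by (apply Hdec; lia). lra.
Qed.

(* On [0, n), [b] rises weakly to its maximum and then falls strictly. *)
Definition unimodal (n : nat) (b : nat -> R) : Prop :=
  forall l, (S (S l) < n)%nat -> b (S l) < b l -> b (S (S l)) < b (S l).

Lemma unimodal_tail n b : unimodal (S n) b -> unimodal n (fun i => b (S i)).
Proof. intros H l Hl. apply H. lia. Qed.

Lemma unimodal_decreasing n b :
  unimodal n b -> (1 < n)%nat -> b 1%nat < b O -> forall l, (S l < n)%nat -> b (S l) < b l.
Proof.
  intros Hb Hn H0. induction l; intros Hl; [exact H0|]. apply Hb; [lia|]. apply IHl. lia.
Qed.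

(* Peel off [b 0] while the sequence rises; once it falls, [alt_nonincreasing] applies. *)
Lemma alt_unimodal_range n (b : nat -> R) (B : R) :
  (forall l, (l <= n)%nat -> 0 <= b l <= B) -> unimodal (S n) b ->
  b O - B <= alt b (S n) <= B.
Proof.
  revert b; induction n; intros b Hb Hu.
  - unfold alt; simpl. specialize (Hb O (le_n _)). lra.
  - rewrite alt_cons.
    assert (HB0 := Hb O ltac:(lia)). assert (HB1 := Hb 1%nat ltac:(lia)).
    destruct (Rlt_le_dec (b 1%nat) (b O)) as [Hlt|Hle].
    + destruct (alt_nonincreasing n (fun i => b (S i))) as [H1 H2].
      * intros l Hl. apply Hb. lia.
      * intros l Hl. apply Rlt_le, (unimodal_decreasing (S (S n)) b Hu); [lia|exact Hlt|lia].
      * lra.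
    + destruct (IHn (fun i => b (S i))) as [H1 H2];
        [intros l Hl; apply Hb; lia| apply unimodal_tail, Hu|]. lra.
Qed.

Lemma alt_unimodal_bound n (b : nat -> R) (B : R) : 0 <= B ->
  (forall l, (l < n)%nat -> 0 <= b l <= B) -> unimodal n b -> Rabs (alt b n) <= B.
Proof.
  intros HB Hb Hu. destruct n as [|n].
  - unfold alt; simpl. rewrite Rabs_R0. exact HB.
  - destruct (alt_unimodal_range n b B) as [H1 H2]; [intros l Hl; apply Hb; lia| exact Hu|].
    assert (0 <= b O) by (apply Hb; lia). apply Rabs_le. lra.
Qed.

(* The step [u (S l) = a (S l) * u l + t l] of [prodrec_u_succ] preserves strict decrease. *)
Lemma affine_step_decreasing a1 a2 u t :
  0 < a1 -> a2 <= a1 -> 0 <= u -> 0 < t -> a1 * u + t < u ->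
  a2 * (a1 * u + t) + a1 * t < a1 * u + t.
Proof.
  intros Ha1 Ha2 Hu Ht Hdec.
  assert (0 <= a1 * u + t) by (assert (0 <= a1 * u) by nra; lra).
  assert (a2 * (a1 * u + t) <= a1 * (a1 * u + t)) by (apply Rmult_le_compat_r; lra).
  assert (0 < u) by nra.
  assert (a1 < 1) by nra.
  destruct (Rle_dec a1 (1/2)); nra.
Qed.

Section ProductRecurrence.

Variable n : nat.
Variables a t h : nat -> R.
Hypothesis a_pos : forall k, (1 <= k <= n)%nat -> 0 < a k.
Hypothesis a_nonincreasing : forall k, (1 <= k < n)%nat -> a (S k) <= a k.
Hypothesis t0_pos : 0 < t O.
Hypothesis t_succ : forall l, (l < n)%nat -> t (S l) = a (S l) * t l.
Hypothesis h0 : h O = 0.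
Hypothesis h_succ : forall l, h (S l) = h l + / a (S l).

Lemma prodrec_pos l : (l <= n)%nat -> 0 < t l.
Proof.
  induction l; intros Hl; [exact t0_pos|].
  rewrite t_succ by lia. apply Rmult_lt_0_compat; [apply a_pos; lia| apply IHl; lia].
Qed.

Lemma prodrec_unimodal : unimodal (S n) t.
Proof.
  intros l Hl Hdec. rewrite t_succ in * by lia. rewrite (t_succ l) by lia.
  assert (0 < t l) by (apply prodrec_pos; lia).
  assert (0 < a (S l)) by (apply a_pos; lia).
  assert (a (S (S l)) <= a (S l)) by (apply a_nonincreasing; lia).
  assert (0 < a (S (S l))) by (apply a_pos; lia).
  nra.
Qed.

Let u l := t l * h l.

Lemma prodrec_u_succ l : (l < n)%nat -> u (S l) = a (S l) * u l + t l.
Proof.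
  intros Hl. unfold u. rewrite t_succ, h_succ by lia.
  assert (0 < a (S l)) by (apply a_pos; lia). field. lra.
Qed.

Lemma prodrec_u_bound l : (l < n)%nat -> 0 <= u (S l) <= INR (S l) * t l.
Proof.
  induction l; intros Hl.
  - rewrite prodrec_u_succ by lia. unfold u. rewrite h0, !Rmult_0_r, Rplus_0_l.
    assert (0 < t O) by (apply prodrec_pos; lia). simpl INR. lra.
  - rewrite prodrec_u_succ by lia. specialize (IHl ltac:(lia)).
    rewrite (t_succ l) by lia.
    assert (a (S (S l)) <= a (S l)) by (apply a_nonincreasing; lia).
    assert (0 < a (S (S l))) by (apply a_pos; lia).
    assert (0 < t l) by (apply prodrec_pos; lia).
    rewrite !S_INR in *. pose proof (pos_INR l). nra.
Qed.

Lemma prodrec_u_unimodal : unimodal (S n) u.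
Proof.
  intros l Hl Hdec. rewrite (prodrec_u_succ (S l)) by lia.
  rewrite (prodrec_u_succ l) in * by lia. rewrite (t_succ l) by lia.
  apply affine_step_decreasing; try (apply a_pos; lia); try (apply prodrec_pos; lia); auto.
  - apply a_nonincreasing. lia.
  - destruct l as [|l]; [unfold u; rewrite h0, Rmult_0_r; lra|].
    apply (prodrec_u_bound l). lia.
Qed.

End ProductRecurrence.

Lemma prodrec_le_scaled n (a a' t t' : nat -> R) (c rho : R) :
  (forall k, (1 <= k <= n)%nat -> 0 <= a k <= rho * a' k) ->
  (forall l, (l < n)%nat -> t (S l) = a (S l) * t l) ->
  (forall l, (l < n)%nat -> t' (S l) = a' (S l) * t' l) ->
  (forall l, (l <= n)%nat -> 0 <= t l) ->
  t O <= c * t' O ->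
  forall l, (l <= n)%nat -> t l <= c * rho ^ l * t' l.
Proof.
  intros Ha Ht Ht' Hpos H0. induction l; intros Hl; [simpl; lra|].
  rewrite Ht, Ht' by lia. specialize (IHl ltac:(lia)).
  assert (0 <= t l) by (apply Hpos; lia). destruct (Ha (S l) ltac:(lia)).
  apply Rle_trans with (rho * a' (S l) * t l); [apply Rmult_le_compat_r; lra|].
  simpl pow. replace (c * (rho * rho ^ l) * (a' (S l) * t' l))
    with (rho * a' (S l) * (c * rho ^ l * t' l)) by ring.
  apply Rmult_le_compat_l; lra.
Qed.

Lemma pow_le_geometric_inv x n : 0 <= x <= 1 -> (1 - x) ^ n * (1 + INR n * x) <= 1.
Proof.
  intros Hx.
  assert (H1 : 1 + INR n * x <= (1 + x) ^ n) by (apply Rle_pow_lin; lra).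
  assert (H2 : 0 <= (1 - x) ^ n) by (apply pow_le; lra).
  assert (H3 : (1 - x * x) ^ n <= 1 ^ n) by (apply pow_incr; nra).
  rewrite pow1 in H3. replace (1 - x * x) with ((1 - x) * (1 + x)) in H3 by ring.
  rewrite Rpow_mult_distr in H3.
  apply Rle_trans with ((1 - x) ^ n * (1 + x) ^ n); [apply Rmult_le_compat_l|]; lra.
Qed.

(* Each term is at most [2 s^2 (1/(e + s - 1) - 1/(e + s))] with [e = n - i]. *)
Lemma sum_lorentzian_le s n : 2 <= s ->
  rsum (fun i => s ^ 2 / (s ^ 2 + (INR n - INR i) ^ 2)) n <= 2 * s.
Proof.
  intros Hs.
  set (phi := fun i : nat => / (INR n - INR i + s)).
  apply Rle_trans with (rsum (fun i => 2 * s ^ 2 * (phi (S i) - phi i)) n).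
  - apply rsum_le. intros i Hi. unfold phi. rewrite S_INR.
    assert (He : 1 <= INR n - INR i) by (assert (INR (S i) <= INR n) by (apply le_INR; lia); rewrite S_INR in *; lra).
    set (e := INR n - INR i) in *.
    replace (INR n - (INR i + 1) + s) with (e + s - 1) by (unfold e; ring).
    replace (/ (e + s - 1) - / (e + s)) with (/ ((e + s - 1) * (e + s))) by (field; lra).
    assert (0 < (e + s - 1) * (e + s)) by nra.
    assert ((e + s - 1) * (e + s) <= 2 * (s ^ 2 + e ^ 2)) by (pose proof (pow2_ge_0 (e - s)); nra).
    replace (2 * s ^ 2 * / ((e + s - 1) * (e + s))) with (s ^ 2 * / ((e + s - 1) * (e + s) / 2))
      by (field; lra).
    unfold Rdiv. apply Rmult_le_compat_l; [nra|]. apply Rinv_le_contravar; nra.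
  - rewrite rsum_scal, rsum_telescope. unfold phi.
    replace (INR n - INR n + s) with s by ring. simpl INR. rewrite Rminus_0_r.
    pose proof (pos_INR n).
    assert (0 < / (INR n + s)) by (apply Rinv_0_lt_compat; lra).
    replace (2 * s ^ 2 * (/ s - / (INR n + s))) with (2 * s - 2 * s ^ 2 * / (INR n + s)) by (field; lra).
    assert (0 <= 2 * s ^ 2 * / (INR n + s)) by (apply Rmult_le_pos; nra). lra.
Qed.

Lemma nat_div_bounds x d : (0 < d)%nat -> (d * (x / d) <= x < d * (x / d) + d)%nat.
Proof. intros. pose proof (Nat.div_mod_eq x d). pose proof (Nat.mod_upper_bound x d). lia. Qed.

Lemma sin_ge_third x : 0 <= x <= PI / 2 -> x / 3 <= sin x.
Proof.
  intros Hx. pose proof PI_4. pose proof PI2_3_2.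
  destruct (SIN x) as [Hlb _]; [lra|lra|].
  eapply Rle_trans; [|exact Hlb].
  unfold sin_lb, sin_approx, sin_term. simpl sum_f_R0. simpl Factorial.fact. simpl INR.
  assert (0 <= x ^ 5) by (apply pow_le; lra).
  assert (x ^ 2 <= 4) by nra.
  assert (x ^ 7 = x ^ 5 * x ^ 2) by ring.
  nra.
Qed.

Lemma sin_le_sin_sym x t : 0 <= x <= PI / 2 -> x <= t <= PI - x -> sin x <= sin t.
Proof.
  intros Hx Ht. pose proof PI_RGT_0.
  destruct (Rle_dec t (PI / 2)); [apply sin_incr_1; lra|].
  rewrite <- (sin_PI_x t). apply sin_incr_1; lra.
Qed.

Lemma angle_le N r p q : (0 < N)%nat -> (0 < q)%nat -> (q * r <= p * N)%nat ->
  INR r * PI / INR N <= INR p * PI / INR q.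
Proof.
  intros HN Hq H. apply lt_0_INR in HN, Hq.
  apply le_INR in H. rewrite !mult_INR in H. pose proof PI_RGT_0.
  apply (Rmult_le_reg_r (INR N * INR q)); [nra|].
  replace (INR r * PI / INR N * (INR N * INR q)) with (PI * (INR q * INR r)) by (field; lra).
  replace (INR p * PI / INR q * (INR N * INR q)) with (PI * (INR p * INR N)) by (field; lra).
  apply Rmult_le_compat_l; lra.
Qed.

Lemma angle_bounds N r : (0 < N)%nat -> (r <= N)%nat -> 0 <= INR r * PI / INR N <= PI.
Proof.
  intros HN Hr. pose proof PI_RGT_0. split.
  - apply Rdiv_le_0_compat; [apply Rmult_le_pos; [apply pos_INR|lra]| apply lt_0_INR; lia].
  - replace PI with (INR 1 * PI / INR 1) at 2 by (simpl; field). apply angle_le; lia.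
Qed.

(** * Chords *)

(* The bracket {r} = v^r - v^-r of the paper is [i * chord N r] (lemma [brace_of_nat]). *)
Definition chord (N r : nat) : R := 2 * sin (INR r * PI / INR N).

Lemma chord_pos N r : (1 <= r < N)%nat -> 0 < chord N r.
Proof.
  intros Hr. unfold chord. assert (0 < INR r) by (apply lt_0_INR; lia).
  assert (INR r < INR N) by (apply lt_INR; lia). pose proof PI_RGT_0.
  assert (0 < sin (INR r * PI / INR N)); [|lra].
  apply sin_gt_0; [apply Rdiv_lt_0_compat; nra|].
  apply (Rmult_lt_reg_r (INR N)); [lra|]. unfold Rdiv. rewrite Rmult_assoc, Rinv_l by lra. nra.
Qed.

Lemma chord_le_2 N r : chord N r <= 2.
Proof. unfold chord. pose proof (SIN_bound (INR r * PI / INR N)). lra. Qed.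

Lemma chord_ge_linear N r : (0 < N)%nat -> (2 * r <= N)%nat -> 2 * INR r / INR N <= chord N r.
Proof.
  intros HN Hr. unfold chord. pose proof PI2_3_2. pose proof (pos_INR r).
  assert (0 < INR N) by (apply lt_0_INR; lia).
  assert (INR r * PI / INR N <= INR 1 * PI / INR 2) by (apply angle_le; lia). simpl INR in *.
  assert (0 <= INR r * PI / INR N) by (apply Rdiv_le_0_compat; nra).
  pose proof (sin_ge_third (INR r * PI / INR N) ltac:(lra)).
  assert (INR r / INR N <= INR r * PI / INR N / 3); [|unfold Rdiv in *; lra].
  unfold Rdiv. rewrite (Rmult_comm (INR r) PI), !Rmult_assoc.
  assert (0 <= INR r * / INR N) by (apply Rmult_le_pos; [lra|left; apply Rinv_0_lt_compat; lra]).
  nra.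
Qed.

Lemma chord_ge_1 N r : (0 < N)%nat -> (N <= 6 * r <= 5 * N)%nat -> 1 <= chord N r.
Proof.
  intros HN Hr. unfold chord. assert (sin (PI / 6) <= sin (INR r * PI / INR N)); [|rewrite sin_PI6 in *; lra].
  pose proof PI_RGT_0. apply sin_le_sin_sym; [lra|]. split.
  - replace (PI / 6) with (INR 1 * PI / INR 6) by (simpl; field). apply angle_le; lia.
  - replace (PI - PI / 6) with (INR 5 * PI / INR 6) by (simpl; field). apply angle_le; lia.
Qed.

Lemma chord_le_1 N r : (0 < N)%nat -> (r <= N)%nat -> (6 * r <= N \/ 5 * N <= 6 * r)%nat ->
  chord N r <= 1.
Proof.
  intros HN Hr Hout. unfold chord. pose proof (angle_bounds N r HN Hr).
  set (t := INR r * PI / INR N) in *.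
  assert (sin t <= sin (PI / 6)); [|rewrite sin_PI6 in *; lra].
  destruct Hout.
  - assert (t <= INR 1 * PI / INR 6) by (apply angle_le; lia). simpl INR in *.
    apply sin_incr_1; lra.
  - assert (INR 5 * PI / INR 6 <= t) by (apply angle_le; lia). simpl INR in *.
    rewrite <- (sin_PI_x t). apply sin_incr_1; lra.
Qed.

(* [A(j, k) = - pair_chord N j k] for [k <= j]. *)
Definition pair_chord (N j k : nat) : R := chord N (j - k) * chord N (j + k).

Lemma pair_chord_cos N j k : (0 < N)%nat -> (k <= j)%nat ->
  pair_chord N j k = 2 * cos (INR (2 * k) * PI / INR N) - 2 * cos (INR (2 * j) * PI / INR N).
Proof.
  intros HN Hk. apply lt_0_INR in HN. unfold pair_chord, chord.
  replace (2 * sin (INR (j - k) * PI / INR N) * (2 * sin (INR (j + k) * PI / INR N)))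
    with (2 * (cos (INR (j + k) * PI / INR N - INR (j - k) * PI / INR N)
               - cos (INR (j - k) * PI / INR N + INR (j + k) * PI / INR N)))
    by (rewrite cos_minus, cos_plus; ring).
  rewrite minus_INR, plus_INR, !mult_INR by exact Hk. simpl INR.
  replace ((INR j + INR k) * PI / INR N - (INR j - INR k) * PI / INR N)
    with ((1 + 1) * INR k * PI / INR N) by (field; lra).
  replace ((INR j - INR k) * PI / INR N + (INR j + INR k) * PI / INR N)
    with ((1 + 1) * INR j * PI / INR N) by (field; lra).
  ring.
Qed.

Lemma pair_chord_nonincreasing N j k : (S k <= j)%nat -> (2 * S k <= N)%nat ->
  pair_chord N j (S k) <= pair_chord N j k.
Proof.
  intros Hj HN. rewrite !pair_chord_cos by lia.
  assert (cos (INR (2 * S k) * PI / INR N) <= cos (INR (2 * k) * PI / INR N)); [|lra].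
  pose proof (angle_bounds N (2 * k) ltac:(lia) ltac:(lia)).
  pose proof (angle_bounds N (2 * S k) ltac:(lia) ltac:(lia)).
  apply cos_decr_1; try lra. apply angle_le; lia.
Qed.

Lemma pair_chord_pos N j k : (k < j)%nat -> (j + k < N)%nat -> 0 < pair_chord N j k.
Proof. intros. unfold pair_chord. apply Rmult_lt_0_compat; apply chord_pos; lia. Qed.

Lemma pair_chord_le_4 N j k : (k < j)%nat -> (j + k < N)%nat -> pair_chord N j k <= 4.
Proof.
  intros. pose proof (pair_chord_pos N j k ltac:(lia) ltac:(lia)). unfold pair_chord in *.
  pose proof (chord_le_2 N (j - k)). pose proof (chord_le_2 N (j + k)).
  pose proof (chord_pos N (j - k) ltac:(lia)). nra.
Qed.

Lemma pair_chord_sub N j0 j k : (0 < N)%nat -> (k <= j <= j0)%nat ->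
  pair_chord N j0 k - pair_chord N j k = pair_chord N j0 j.
Proof. intros. rewrite !pair_chord_cos by lia. ring. Qed.

Lemma pair_chord_center_ge_2 N k : (3 <= N)%nat -> (6 * k <= N)%nat -> 2 <= pair_chord N (N / 2) k.
Proof.
  intros HN Hk. pose proof (Nat.div_mod_eq N 2). pose proof (Nat.mod_upper_bound N 2).
  rewrite pair_chord_cos by lia. pose proof PI_RGT_0.
  pose proof (angle_bounds N (2 * k) ltac:(lia) ltac:(lia)).
  pose proof (angle_bounds N (2 * (N / 2)) ltac:(lia) ltac:(lia)).
  assert (INR (2 * k) * PI / INR N <= PI / 3)
    by (replace (PI / 3) with (INR 1 * PI / INR 3) by (simpl; field); apply angle_le; lia).
  assert (2 * (PI / 3) <= INR (2 * (N / 2)) * PI / INR N)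
    by (replace (2 * (PI / 3)) with (INR 2 * PI / INR 3) by (simpl; field); apply angle_le; lia).
  assert (cos (PI / 3) <= cos (INR (2 * k) * PI / INR N)) by (apply cos_decr_1; lra).
  assert (cos (INR (2 * (N / 2)) * PI / INR N) <= cos (2 * (PI / 3))) by (apply cos_decr_1; lra).
  rewrite cos_PI3, cos_2PI3 in *. lra.
Qed.

(* With [E = N/2 - j]: [pair_chord N (N/2) k - pair_chord N j k = pair_chord N (N/2) j],
   which is at least [chord N E ^ 2 >= 4 (E/N)^2], while [pair_chord N (N/2) k <= 4]. *)
Lemma pair_chord_le_center N j k : (2 <= N)%nat -> (k < j <= N / 2)%nat ->
  pair_chord N j k <= (1 - (INR (N / 2 - j) / INR N) ^ 2) * pair_chord N (N / 2) k.
Proof.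
  intros HN Hj. pose proof (Nat.div_mod_eq N 2). pose proof (Nat.mod_upper_bound N 2).
  set (j0 := (N / 2)%nat) in *. set (E := (j0 - j)%nat).
  assert (HNpos : 0 < INR N) by (apply lt_0_INR; lia).
  pose proof (pair_chord_sub N j0 j k ltac:(lia) ltac:(lia)).
  assert (Hlin : 2 * INR E / INR N <= chord N E) by (apply chord_ge_linear; lia).
  assert (Hsym : chord N E <= chord N (j0 + j)).
  { unfold chord. apply Rmult_le_compat_l; [lra|]. pose proof (angle_bounds N E ltac:(lia) ltac:(lia)).
    apply sin_le_sin_sym.
    - assert (INR E * PI / INR N <= INR 1 * PI / INR 2) by (apply angle_le; lia). simpl INR in *. lra.
    - split; [apply angle_le; nia|].
      replace (PI - INR E * PI / INR N) with (INR (N - E) * PI / INR N)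
        by (rewrite minus_INR by lia; field; lra).
      apply angle_le; nia. }
  assert (Hcenter : pair_chord N j0 j >= 4 * (INR E / INR N) ^ 2).
  { unfold pair_chord. fold E. assert (0 <= INR E / INR N) by (apply Rdiv_le_0_compat; [apply pos_INR|lra]).
    unfold Rdiv in *. nra. }
  pose proof (pair_chord_le_4 N j0 k ltac:(lia) ltac:(lia)).
  pose proof (pow2_ge_0 (INR E / INR N)). nra.
Qed.

(* [S(j - l, j + l) = i^(2l+1) chord_prod N j l] and
   [inv_pair_sum N j l = - sum_(k=1..l) 1/A(j,k)]. *)
Definition chord_prod (N j l : nat) : R := prodR (chord N) (seq (j - l) (2 * l + 1)).

Definition inv_pair_sum (N j l : nat) : R := rsum (fun i => / pair_chord N j (S i)) l.

Lemma chord_prod_0 N j : chord_prod N j 0 = chord N j.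
Proof. unfold chord_prod, prodR. rewrite Nat.sub_0_r. simpl. ring. Qed.

Lemma chord_prod_succ N j l : (S l <= j)%nat ->
  chord_prod N j (S l) = pair_chord N j (S l) * chord_prod N j l.
Proof.
  intros Hl. unfold chord_prod, pair_chord.
  replace (2 * S l + 1)%nat with (S (S (2 * l + 1))) by lia.
  rewrite seq_S. cbn [seq]. replace (S (j - S l)) with (j - l)%nat by lia.
  replace (j - S l + S (2 * l + 1))%nat with (j + S l)%nat by lia.
  change ((j - S l)%nat :: seq (j - l) (2 * l + 1) ++ (j + S l)%nat :: nil)
    with (((j - S l)%nat :: nil) ++ seq (j - l) (2 * l + 1) ++ ((j + S l)%nat :: nil)).
  rewrite !prodR_app. unfold prodR. simpl. ring.
Qed.

Lemma chord_prod_pos N j l : (l < j)%nat -> (j + l < N)%nat -> 0 < chord_prod N j l.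
Proof.
  intros. apply prodR_pos. intros r Hr. apply in_seq in Hr. apply chord_pos. lia.
Qed.

Section ChordProductRecurrence.

Variables N j : nat.
Hypothesis j_pos : (1 <= j)%nat.
Hypothesis j_small : (2 * j < N)%nat.

Let a_pos k : (1 <= k <= j - 1)%nat -> 0 < pair_chord N j k.
Proof. intros. apply pair_chord_pos; lia. Qed.

Let a_nonincreasing k : (1 <= k < j - 1)%nat -> pair_chord N j (S k) <= pair_chord N j k.
Proof. intros. apply pair_chord_nonincreasing; lia. Qed.

Let t0_pos : 0 < chord_prod N j 0.
Proof. apply chord_prod_pos; lia. Qed.

Let t_succ l : (l < j - 1)%nat -> chord_prod N j (S l) = pair_chord N j (S l) * chord_prod N j l.
Proof. intros. apply chord_prod_succ. lia. Qed.

Let j_eq : j = S (j - 1).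
Proof. lia. Qed.

Lemma chord_prod_unimodal : unimodal j (chord_prod N j).
Proof. rewrite j_eq at 1. exact (prodrec_unimodal _ _ _ a_pos a_nonincreasing t0_pos t_succ). Qed.

Lemma chord_prod_weighted_unimodal :
  unimodal j (fun l => chord_prod N j l * inv_pair_sum N j l).
Proof.
  rewrite j_eq at 1.
  exact (prodrec_u_unimodal _ _ _ _ a_pos a_nonincreasing t0_pos t_succ eq_refl (fun l => eq_refl)).
Qed.

Lemma chord_prod_weighted_bound l : (S l < j)%nat ->
  0 <= chord_prod N j (S l) * inv_pair_sum N j (S l) <= INR (S l) * chord_prod N j l.
Proof.
  intros Hl.
  exact (prodrec_u_bound _ _ _ _ a_pos a_nonincreasing t0_pos t_succ eq_refl (fun l => eq_refl) l
    ltac:(lia)).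
Qed.

End ChordProductRecurrence.

Lemma map_seq_shift {B} (f : nat -> B) a n : map (fun i => f (a + i)%nat) (seq 0 n) = map f (seq a n).
Proof.
  revert a; induction n; intros a; [reflexivity|]. simpl. rewrite Nat.add_0_r. f_equal.
  rewrite <- IHn, <- seq_shift, map_map. apply map_ext. intros i. f_equal. lia.
Qed.

Lemma Csum_seq_pairs (X Y : nat -> R) n :
  fold_right Cplus (RtoC 0) (map (fun i => (X i, Y i)) (seq 0 n)) = (rsum X n, rsum Y n).
Proof.
  rewrite <- !fold_Rplus_seq. induction (seq 0 n); simpl; [reflexivity|]. rewrite IHl. reflexivity.
Qed.

Lemma Csum_scal {A} (q : C) (F : A -> C) s :
  fold_right Cplus (RtoC 0) (map (fun i => Cmult q (F i)) s) =
  Cmult q (fold_right Cplus (RtoC 0) (map F s)).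
Proof. induction s; simpl; [|rewrite IHs]; ring. Qed.

Lemma Cmod_sum_le {A} (F : A -> C) s :
  Cmod (fold_right Cplus (RtoC 0) (map F s)) <= fold_right Rplus 0 (map (fun i => Cmod (F i)) s).
Proof.
  induction s; simpl; [rewrite Cmod_0; lra|].
  eapply Rle_trans; [apply Cmod_triangle|]. lra.
Qed.

Lemma Cmod_le_abs x y : Cmod (x, y) <= Rabs x + Rabs y.
Proof.
  unfold Cmod; cbn [fst snd]. pose proof (Rabs_pos x). pose proof (Rabs_pos y).
  rewrite <- (sqrt_pow2 (Rabs x + Rabs y)) by lra. apply sqrt_le_1_alt.
  rewrite <- (pow2_abs x), <- (pow2_abs y). nra.
Qed.

Lemma Cprod_imag {A} (g : A -> R) s :
  fold_right Cmult (RtoC 1) (map (fun x => (0, g x)) s) = Cmult (Cpow (0, 1) (length s)) (RtoC (prodR g s)).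
Proof.
  induction s; unfold prodR in *; simpl; [ring|].
  rewrite IHs. destruct (Cpow (0, 1) (length s)) as [c1 c2].
  unfold Cmult, RtoC; simpl. f_equal; ring.
Qed.

Lemma Ci_pow_odd l : Cpow (0, 1) (2 * l + 1) = (0, (-1) ^ l).
Proof.
  induction l; [simpl; unfold Cmult; simpl; f_equal; ring|].
  replace (2 * S l + 1)%nat with (S (S (2 * l + 1))) by lia.
  rewrite !Cpow_S, IHl. unfold Cmult; simpl. f_equal; ring.
Qed.

Lemma IZR_of_nat_angle N r : PI * IZR (Z.of_nat r) / INR N = INR r * PI / INR N.
Proof. rewrite <- INR_IZR_INZ. unfold Rdiv. ring. Qed.

Lemma brace_of_nat N r : brace N (Z.of_nat r) = (0, chord N r).
Proof.
  unfold brace, vpow, cexpi, chord, Cminus, Copp, Cplus. simpl.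
  rewrite opp_IZR, <- (IZR_of_nat_angle N r).
  replace (PI * - IZR (Z.of_nat r) / INR N) with (- (PI * IZR (Z.of_nat r) / INR N)) by (unfold Rdiv; ring).
  rewrite cos_neg, sin_neg. f_equal; ring.
Qed.

Lemma vpow_sym_of_nat N r :
  Cplus (vpow N (Z.of_nat r)) (vpow N (- Z.of_nat r)) = (2 * cos (INR r * PI / INR N), 0).
Proof.
  unfold vpow, cexpi, Cplus. simpl. rewrite opp_IZR, <- (IZR_of_nat_angle N r).
  replace (PI * - IZR (Z.of_nat r) / INR N) with (- (PI * IZR (Z.of_nat r) / INR N)) by (unfold Rdiv; ring).
  rewrite cos_neg, sin_neg. f_equal; ring.
Qed.

Lemma Sfun_of_nat N j l : (l <= j)%nat ->
  Sfun N (Z.of_nat j - Z.of_nat l) (Z.of_nat j + Z.of_nat l) = (0, (-1) ^ l * chord_prod N j l).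
Proof.
  intros Hl. unfold Sfun, Cprod_range, Zrange.
  replace (Z.to_nat (Z.of_nat j + Z.of_nat l - (Z.of_nat j - Z.of_nat l) + 1)) with (2 * l + 1)%nat by lia.
  rewrite map_map.
  rewrite (map_ext _ (fun i => (0, chord N (j - l + i)))).
  2:{ intros i. rewrite <- brace_of_nat. f_equal. lia. }
  rewrite Cprod_imag, length_seq, Ci_pow_odd.
  replace (prodR _ (seq 0 _)) with (chord_prod N j l)
    by (unfold chord_prod, prodR; now rewrite (map_seq_shift (chord N))).
  unfold Cmult, RtoC; cbn [fst snd]. f_equal; ring.
Qed.

Lemma sum_inv_A_of_nat N j l : (l < j)%nat -> (j + l < N)%nat ->
  Csum_range 1 (Z.of_nat l) (fun k => Cinv (Afun N (Z.of_nat j) k)) = (- inv_pair_sum N j l, 0).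
Proof.
  intros Hl HN. unfold Csum_range, Zrange.
  replace (Z.to_nat (Z.of_nat l - 1 + 1)) with l by lia. rewrite map_map.
  rewrite (map_ext_in _ (fun i => (-1 * / pair_chord N j (S i), 0))).
  - rewrite Csum_seq_pairs, rsum_scal, rsum_const. unfold inv_pair_sum. f_equal; ring.
  - intros i Hi. apply in_seq in Hi.
    pose proof (chord_pos N (j - S i) ltac:(lia)). pose proof (chord_pos N (j + S i) ltac:(lia)).
    unfold Afun. replace (Z.of_nat j - (1 + Z.of_nat i))%Z with (Z.of_nat (j - S i)) by lia.
    replace (Z.of_nat j + (1 + Z.of_nat i))%Z with (Z.of_nat (j + S i)) by lia.
    rewrite !brace_of_nat. unfold pair_chord.
    unfold Cinv, Cmult; cbn [fst snd]. f_equal; field; lra.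
Qed.

(* [(v^j + v^-j)/{j}] contributes [cot(j pi/N)], and [i^(2l+1)] in [S(j-l, j+l)] the sign [(-1)^l]. *)
Lemma D1_of_nat N m j l : (l < j)%nat -> (2 * j < N)%nat ->
  D1 N m (Z.of_nat j) (Z.of_nat l) =
  ((-1) ^ l * chord_prod N j l *
     (2 * cos (INR j * PI / INR N) / chord N j + 2 * chord N (2 * j) * inv_pair_sum N j l),
   (-1) ^ l * chord_prod N j l * (IZR m * INR j / 2)).
Proof.
  intros Hl HN. pose proof (chord_pos N j ltac:(lia)).
  unfold D1. rewrite Sfun_of_nat, sum_inv_A_of_nat, vpow_sym_of_nat by lia.
  replace (2 * Z.of_nat j)%Z with (Z.of_nat (2 * j)) by lia.
  rewrite !brace_of_nat, INR_IZR_INZ.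
  unfold Cdiv, Cinv, Cmult, Cplus, RtoC; cbn [fst snd]. f_equal; field; lra.
Qed.

Lemma Cmod_qpow N m j : Cmod (qpow N m j) = 1.
Proof.
  unfold qpow, cexpi, Cmod; cbn [fst snd]. rewrite <- sqrt_1. f_equal.
  rewrite <- (sin2_cos2 (PI * IZR m * IZR (j * j) / (4 * INR N))). unfold Rsqr. ring.
Qed.

Lemma cot_bound N j : (1 <= j)%nat -> (2 * j < N)%nat ->
  0 <= 2 * cos (INR j * PI / INR N) / chord N j <= INR N.
Proof.
  intros Hj HN. pose proof (chord_pos N j ltac:(lia)).
  assert (HNpos : 0 < INR N) by (apply lt_0_INR; lia).
  assert (Hlin : 2 * INR j / INR N <= chord N j) by (apply chord_ge_linear; lia).
  assert (Hj1 : 1 <= INR j) by (apply (le_INR 1); lia).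
  assert (Hangle : INR j * PI / INR N <= PI / 2)
    by (replace (PI / 2) with (INR 1 * PI / INR 2) by (simpl; field); apply angle_le; lia).
  pose proof (angle_bounds N j ltac:(lia) ltac:(lia)).
  assert (0 <= cos (INR j * PI / INR N)) by (apply cos_ge_0; lra).
  pose proof (COS_bound (INR j * PI / INR N)).
  split; [apply Rdiv_le_0_compat; lra|].
  apply (Rmult_le_reg_r (chord N j)); [lra|]. unfold Rdiv. rewrite Rmult_assoc, Rinv_l by lra.
  assert (2 <= INR N * chord N j); [|nra].
  apply (Rmult_le_compat_l (INR N)) in Hlin; [|lra].
  replace (INR N * (2 * INR j / INR N)) with (2 * INR j) in Hlin by (field; lra). lra.
Qed.

Lemma inner_sum_eq N m j : (2 * j < N)%nat ->
  Csum_range 0 (Z.of_nat j - 1) (fun l => Cmult (qpow N m (Z.of_nat j)) (D1 N m (Z.of_nat j) l)) =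
  Cmult (qpow N m (Z.of_nat j))
    (2 * cos (INR j * PI / INR N) / chord N j * alt (chord_prod N j) j
       + 2 * chord N (2 * j) * alt (fun l => chord_prod N j l * inv_pair_sum N j l) j,
     IZR m * INR j / 2 * alt (chord_prod N j) j).
Proof.
  intros HN. unfold Csum_range, Zrange. replace (Z.to_nat (Z.of_nat j - 1 - 0 + 1)) with j by lia.
  rewrite map_map. unfold alt. rewrite <- !rsum_scal, <- rsum_plus, <- Csum_seq_pairs, <- Csum_scal.
  f_equal. apply map_ext_in. intros i Hi. apply in_seq in Hi.
  rewrite Z.add_0_l, D1_of_nat by lia. f_equal. f_equal; ring.
Qed.

Lemma alt_chord_prod_le N j T : (1 <= j)%nat -> (2 * j < N)%nat ->
  (forall l, (l < j)%nat -> chord_prod N j l <= T) -> Rabs (alt (chord_prod N j) j) <= T.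
Proof.
  intros Hj HN HT. assert (0 < T) by (eapply Rlt_le_trans; [apply (chord_prod_pos N j 0)| apply HT]; lia).
  apply alt_unimodal_bound; [lra| |apply chord_prod_unimodal; lia].
  intros l Hl. split; [left; apply chord_prod_pos; lia| apply HT, Hl].
Qed.

Lemma alt_chord_prod_weighted_le N j T : (1 <= j)%nat -> (2 * j < N)%nat ->
  (forall l, (l < j)%nat -> chord_prod N j l <= T) ->
  Rabs (alt (fun l => chord_prod N j l * inv_pair_sum N j l) j) <= INR N * T.
Proof.
  intros Hj HN HT. assert (0 < T) by (eapply Rlt_le_trans; [apply (chord_prod_pos N j 0)| apply HT]; lia).
  pose proof (pos_INR N).
  apply alt_unimodal_bound; [nra| |apply chord_prod_weighted_unimodal; lia].
  intros [|l] Hl; [unfold inv_pair_sum; simpl; nra|].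
  destruct (chord_prod_weighted_bound N j ltac:(lia) ltac:(lia) l Hl) as [Hu0 Hu1].
  split; [exact Hu0|]. eapply Rle_trans; [exact Hu1|].
  assert (INR (S l) <= INR N) by (apply le_INR; lia).
  assert (chord_prod N j l <= T) by (apply HT; lia).
  pose proof (chord_prod_pos N j l ltac:(lia) ltac:(lia)). pose proof (pos_INR (S l)). nra.
Qed.

Lemma inner_sum_bound N m j T : (1 <= j)%nat -> (2 * j < N)%nat ->
  (forall l, (l < j)%nat -> chord_prod N j l <= T) ->
  Cmod (Csum_range 0 (Z.of_nat j - 1) (fun l => Cmult (qpow N m (Z.of_nat j)) (D1 N m (Z.of_nat j) l)))
  <= (5 + Rabs (IZR m)) * INR N * T.
Proof.
  intros Hj HN HT. rewrite inner_sum_eq, Cmod_mult, Cmod_qpow, Rmult_1_l by lia.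
  pose proof (alt_chord_prod_le N j T Hj HN HT) as Ht.
  pose proof (alt_chord_prod_weighted_le N j T Hj HN HT) as Hu.
  set (t := alt (chord_prod N j) j) in *. set (u := alt _ j) in Hu |- *.
  destruct (cot_bound N j Hj HN) as [Hc0 Hc1].
  set (c := 2 * cos (INR j * PI / INR N) / chord N j) in *.
  assert (Hd : Rabs (2 * chord N (2 * j)) <= 4).
  { unfold chord. pose proof (SIN_bound (INR (2 * j) * PI / INR N)). apply Rabs_le. lra. }
  assert (He : Rabs (IZR m * INR j / 2) <= Rabs (IZR m) * INR N).
  { pose proof (pos_INR j). pose proof (Rabs_pos (IZR m)).
    replace (IZR m * INR j / 2) with (IZR m * (INR j / 2)) by (unfold Rdiv; ring).
    rewrite Rabs_mult, (Rabs_pos_eq (INR j / 2)) by lra.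
    assert (INR j <= INR N) by (apply le_INR; lia). nra. }
  set (d := 2 * chord N (2 * j)) in *. set (e := IZR m * INR j / 2) in *.
  eapply Rle_trans; [apply Cmod_le_abs|].
  eapply Rle_trans; [apply Rplus_le_compat_r, Rabs_triang|].
  rewrite !Rabs_mult, (Rabs_pos_eq c) by lra.
  pose proof (Rabs_pos t). pose proof (Rabs_pos u). pose proof (Rabs_pos d). pose proof (Rabs_pos e).
  assert (c * Rabs t <= INR N * T) by (apply Rmult_le_compat; lra).
  assert (Rabs d * Rabs u <= 4 * (INR N * T)) by (apply Rmult_le_compat; lra).
  assert (Rabs e * Rabs t <= Rabs (IZR m) * INR N * T) by (apply Rmult_le_compat; lra).
  lra.
Qed.

(** * Comparison with F_N *)

(* The product of the chords that are [>= 1]. *)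
Definition central_chord_prod (N : nat) : R :=
  prodR (chord N) (seq (S (N / 6)) (5 * N / 6 - N / 6)).

Lemma FN_eq N : (6 <= N)%nat -> FN N = chord N (N / 6) * central_chord_prod N.
Proof.
  intros HN. pose proof (nat_div_bounds N 6 ltac:(lia)). pose proof (nat_div_bounds (5 * N) 6 ltac:(lia)).
  unfold FN, sinprod, central_chord_prod.
  change (fun r : nat => 2 * sin (INR r * PI / INR N)) with (chord N).
  change (fold_right Rmult 1 (map (chord N) (seq 1 (5 * N / 6))))
    with (prodR (chord N) (seq 1 (5 * N / 6))).
  change (fold_right Rmult 1 (map (chord N) (seq 1 (N / 6 - 1))))
    with (prodR (chord N) (seq 1 (N / 6 - 1))).
  replace (5 * N / 6)%nat with ((N / 6 - 1) + 1 + (5 * N / 6 - N / 6))%nat at 1 by lia.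
  rewrite seq_split3, !prodR_app.
  replace (1 + (N / 6 - 1))%nat with (N / 6)%nat by lia.
  replace (N / 6 + 1)%nat with (S (N / 6)) by lia.
  assert (0 < prodR (chord N) (seq 1 (N / 6 - 1)))
    by (apply prodR_pos; intros r Hr; apply in_seq in Hr; apply chord_pos; lia).
  change (prodR (chord N) (seq (N / 6) 1)) with (chord N (N / 6) * 1). field. lra.
Qed.

Lemma chord_prod_le_central N j l : (6 <= N)%nat -> (l < j)%nat -> (j + l < N)%nat ->
  chord_prod N j l <= central_chord_prod N.
Proof.
  intros HN Hl HjN. pose proof (nat_div_bounds N 6 ltac:(lia)). pose proof (nat_div_bounds (5 * N) 6 ltac:(lia)).
  apply (prodR_seq_le_window (chord N) N); try lia.
  - intros r Hr. left. apply chord_pos. lia.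
  - intros r Hr. apply chord_ge_1; lia.
  - intros r Hr Hout. apply chord_le_1; lia.
Qed.

Lemma chord_sixth_ge N : (20 <= N)%nat -> 1 / 4 <= chord N (N / 6).
Proof.
  intros HN. pose proof (nat_div_bounds N 6 ltac:(lia)).
  assert (HNpos : 0 < INR N) by (apply lt_0_INR; lia).
  assert (H8 : INR N <= 8 * INR (N / 6)) by (replace 8 with (INR 8) by (simpl; ring);
                                              rewrite <- mult_INR; apply le_INR; lia).
  eapply Rle_trans; [|apply chord_ge_linear; lia].
  apply (Rmult_le_reg_r (INR N)); [lra|].
  replace (2 * INR (N / 6) / INR N * INR N) with (2 * INR (N / 6)) by (field; lra). lra.
Qed.

Lemma FN_pos N : (6 <= N)%nat -> 0 < FN N.
Proof.
  intros HN. pose proof (nat_div_bounds N 6 ltac:(lia)). pose proof (nat_div_bounds (5 * N) 6 ltac:(lia)).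
  rewrite FN_eq by lia. apply Rmult_lt_0_compat; [apply chord_pos; lia|].
  apply prodR_pos. intros r Hr. apply in_seq in Hr. apply chord_pos. lia.
Qed.

Lemma chord_prod_le_FN N j l : (20 <= N)%nat -> (l < j)%nat -> (j + l < N)%nat ->
  chord_prod N j l <= 4 * FN N.
Proof.
  intros HN Hl HjN. pose proof (FN_pos N ltac:(lia)). rewrite FN_eq in * by lia.
  pose proof (chord_sixth_ge N HN). pose proof (chord_prod_le_central N j l ltac:(lia) Hl HjN).
  assert (0 < central_chord_prod N) by (apply (Rmult_lt_reg_l (chord N (N / 6))); lra).
  nra.
Qed.

Lemma pow2_le_FN N : (20 <= N)%nat -> 2 ^ (N / 6) <= 4 * FN N.
Proof.
  intros HN. pose proof (nat_div_bounds N 2 ltac:(lia)). pose proof (nat_div_bounds N 6 ltac:(lia)).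
  eapply Rle_trans; [|apply (chord_prod_le_FN N (N / 2) (N / 6)); lia].
  assert (Hcmp : 2 ^ (N / 6) <= 1 * 1 ^ (N / 6) * chord_prod N (N / 2) (N / 6));
    [|rewrite pow1 in Hcmp; lra].
  apply (prodrec_le_scaled (N / 6) (fun _ => 2) (pair_chord N (N / 2)) (pow 2)); try lia.
  - intros k Hk. split; [lra|]. rewrite Rmult_1_l. apply pair_chord_center_ge_2; lia.
  - intros l Hl. reflexivity.
  - intros l Hl. apply chord_prod_succ. lia.
  - intros l Hl. apply pow_le. lra.
  - rewrite chord_prod_0, Rmult_1_l, pow_O. apply chord_ge_1; lia.
Qed.

Lemma chord_prod_le_pow4 N j l : (l < j)%nat -> (2 * j < N)%nat -> chord_prod N j l <= 2 * 4 ^ l.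
Proof.
  intros Hl HN.
  assert (Hcmp : chord_prod N j l <= 2 * 1 ^ l * 4 ^ l); [|rewrite pow1, Rmult_1_r in Hcmp; exact Hcmp].
  apply (prodrec_le_scaled (j - 1) (pair_chord N j) (fun _ => 4)); try lia.
  - intros k Hk. split; [left; apply pair_chord_pos; lia|]. rewrite Rmult_1_l. apply pair_chord_le_4; lia.
  - intros l' Hl'. apply chord_prod_succ. lia.
  - intros l' Hl'. reflexivity.
  - intros l' Hl'. left. apply chord_prod_pos; lia.
  - rewrite chord_prod_0, pow_O. pose proof (chord_le_2 N j). lra.
Qed.

Lemma chord_prod_le_center N j l : (l < j)%nat -> (2 * j < N)%nat ->
  chord_prod N j l <= 2 * (1 - (INR (N / 2 - j) / INR N) ^ 2) ^ l * chord_prod N (N / 2) l.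
Proof.
  intros Hl HN. pose proof (nat_div_bounds N 2 ltac:(lia)).
  apply (prodrec_le_scaled (j - 1) (pair_chord N j) (pair_chord N (N / 2))); try lia.
  - intros k Hk. split; [left; apply pair_chord_pos; lia|]. apply pair_chord_le_center; lia.
  - intros l' Hl'. apply chord_prod_succ. lia.
  - intros l' Hl'. apply chord_prod_succ. lia.
  - intros l' Hl'. left. apply chord_prod_pos; lia.
  - rewrite !chord_prod_0. pose proof (chord_le_2 N j). assert (1 <= chord N (N / 2)) by (apply chord_ge_1; lia).
    lra.
Qed.

Lemma pow_one_sub_sq_le (N E : R) l : 0 < N -> 0 <= E <= N -> N <= 48 * INR l ->
  (1 - (E / N) ^ 2) ^ l <= 48 * N / (48 * N + E ^ 2).
Proof.
  intros HN HE Hl. set (x := (E / N) ^ 2).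
  assert (Hx : 0 <= x <= 1).
  { unfold x. assert (0 <= E / N <= 1); [|split; [apply pow2_ge_0|]; nra].
    split; [apply Rdiv_le_0_compat; lra|]. apply (Rmult_le_reg_r N); [lra|].
    replace (E / N * N) with E by (field; lra). lra. }
  assert (Hden : 48 * N + E ^ 2 <= 48 * N * (1 + INR l * x)).
  { unfold x. replace (48 * N * (1 + INR l * (E / N) ^ 2)) with (48 * N + (48 * INR l / N) * E ^ 2)
      by (field; lra).
    assert (1 <= 48 * INR l / N); [|nra].
    apply (Rmult_le_reg_r N); [lra|]. replace (48 * INR l / N * N) with (48 * INR l) by (field; lra). lra. }
  pose proof (pow_le_geometric_inv x l Hx). pose proof (pos_INR l).
  assert (0 <= (1 - x) ^ l) by (apply pow_le; lra).
  apply (Rmult_le_reg_r (48 * N + E ^ 2)); [nra|].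
  replace (48 * N / (48 * N + E ^ 2) * (48 * N + E ^ 2)) with (48 * N) by (field; nra). nra.
Qed.

(* For [l <= N/48] the crude bound [2 * 4^l] is already small compared with [F_N >= 2^(N/6) / 4]. *)
Lemma chord_prod_le_short N j l : (20 <= N)%nat -> (l <= N / 48)%nat -> (l < j)%nat -> (2 * j < N)%nat ->
  chord_prod N j l <= 8 * FN N * / 64 ^ (N / 48).
Proof.
  intros HN Hlk Hl Hj. pose proof (nat_div_bounds N 6 ltac:(lia)). pose proof (nat_div_bounds N 48 ltac:(lia)).
  set (k := (N / 48)%nat) in *.
  assert (H64 : 0 < 64 ^ k) by (apply pow_lt; lra).
  assert (H4 : 4 ^ l <= 4 ^ k) by (apply Rle_pow; [lra|lia]).
  assert (H256 : 4 ^ k * 64 ^ k <= 4 * FN N).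
  { rewrite <- Rpow_mult_distr. replace (4 * 64) with (2 ^ 8) by (simpl; ring).
    rewrite <- pow_mult. eapply Rle_trans; [|apply pow2_le_FN; lia].
    apply Rle_pow; [lra|lia]. }
  pose proof (chord_prod_le_pow4 N j l Hl Hj).
  apply (Rmult_le_reg_r (64 ^ k)); [lra|].
  replace (8 * FN N * / 64 ^ k * 64 ^ k) with (8 * FN N) by (field; lra).
  assert (0 <= 4 ^ l) by (apply pow_le; lra). nra.
Qed.

Lemma chord_prod_le_long N j l : (20 <= N)%nat -> (N / 48 < l)%nat -> (l < j)%nat -> (2 * j < N)%nat ->
  chord_prod N j l <= 8 * FN N * (48 * INR N / (48 * INR N + INR (N / 2 - j) ^ 2)).
Proof.
  intros HN Hkl Hl Hj. pose proof (nat_div_bounds N 2 ltac:(lia)). pose proof (nat_div_bounds N 48 ltac:(lia)).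
  assert (Hrho : (1 - (INR (N / 2 - j) / INR N) ^ 2) ^ l <= 48 * INR N / (48 * INR N + INR (N / 2 - j) ^ 2)).
  { apply pow_one_sub_sq_le.
    - apply lt_0_INR. lia.
    - split; [apply pos_INR| apply le_INR; lia].
    - replace 48 with (INR 48) by (simpl; ring). rewrite <- mult_INR. apply le_INR. lia. }
  pose proof (chord_prod_le_center N j l Hl Hj).
  pose proof (chord_prod_le_FN N (N / 2) l ltac:(lia) ltac:(lia) ltac:(lia)).
  pose proof (chord_prod_pos N j l Hl ltac:(lia)). pose proof (chord_prod_pos N (N / 2) l ltac:(lia) ltac:(lia)).
  set (rho := (1 - (INR (N / 2 - j) / INR N) ^ 2) ^ l) in *.
  assert (0 < rho) by nra.
  nra.
Qed.

Lemma chord_prod_bound N j l : (20 <= N)%nat -> (l < j)%nat -> (2 * j < N)%nat ->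
  chord_prod N j l <=
  8 * FN N * (48 * INR N / (48 * INR N + INR (N / 2 - j) ^ 2) + / 64 ^ (N / 48)).
Proof.
  intros HN Hl Hj. pose proof (FN_pos N ltac:(lia)).
  assert (0 <= / 64 ^ (N / 48)) by (left; apply Rinv_0_lt_compat, pow_lt; lra).
  assert (0 <= 48 * INR N / (48 * INR N + INR (N / 2 - j) ^ 2)).
  { pose proof (pos_INR N). pose proof (pow2_ge_0 (INR (N / 2 - j))).
    assert (0 < INR N) by (apply lt_0_INR; lia). apply Rdiv_le_0_compat; lra. }
  destruct (le_lt_dec l (N / 48)).
  - pose proof (chord_prod_le_short N j l HN ltac:(lia) Hl Hj). nra.
  - pose proof (chord_prod_le_long N j l HN ltac:(lia) Hl Hj). nra.
Qed.

(** * The sum over j *)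

Lemma LHS_le_sum N m : (20 <= N)%nat ->
  Cmod (LHS N m) <=
  8 * (5 + Rabs (IZR m)) * INR N * FN N *
  (rsum (fun i => 48 * INR N / (48 * INR N + (INR (N / 2 - 1) - INR i) ^ 2)) (N / 2 - 1)
   + INR (N / 2 - 1) * / 64 ^ (N / 48)).
Proof.
  intros HN. pose proof (nat_div_bounds N 2 ltac:(lia)).
  set (C := 8 * (5 + Rabs (IZR m)) * INR N * FN N).
  assert (HC : 0 <= C).
  { unfold C. pose proof (Rabs_pos (IZR m)). pose proof (pos_INR N). pose proof (FN_pos N ltac:(lia)).
    assert (0 <= 8 * (5 + Rabs (IZR m)) * INR N) by (apply Rmult_le_pos; lra).
    apply Rmult_le_pos; lra. }
  unfold LHS. unfold Csum_range at 1. unfold Zrange at 1.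
  replace (Z.to_nat (Z.of_nat N / 2 - 1 - 1 + 1)) with (N / 2 - 1)%nat
    by (change 2%Z with (Z.of_nat 2); rewrite <- Nat2Z.inj_div; lia).
  rewrite map_map. eapply Rle_trans; [apply Cmod_sum_le|]. rewrite fold_Rplus_seq.
  rewrite <- rsum_const, <- rsum_plus, <- rsum_scal. apply rsum_le. intros i Hi.
  assert (Hterm : 0 <= C * (48 * INR N / (48 * INR N + (INR (N / 2 - 1) - INR i) ^ 2) + / 64 ^ (N / 48))).
  { apply Rmult_le_pos; [exact HC|]. apply Rplus_le_le_0_compat.
    - assert (0 < INR N) by (apply lt_0_INR; lia).
      pose proof (pow2_ge_0 (INR (N / 2 - 1) - INR i)). apply Rdiv_le_0_compat; lra.
    - left. apply Rinv_0_lt_compat, pow_lt. lra. }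
  destruct (Z.even _); [|rewrite Cmod_0; exact Hterm].
  replace (1 + Z.of_nat i)%Z with (Z.of_nat (S i)) by lia.
  eapply Rle_trans; [apply inner_sum_bound; try lia; intros l Hl; apply chord_prod_bound; lia|].
  right. replace (INR (N / 2 - S i)) with (INR (N / 2 - 1) - INR i)
    by (rewrite <- minus_INR by lia; f_equal; lia).
  unfold C. ring.
Qed.

Lemma LHS_sum_factor_le N : (20 <= N)%nat ->
  rsum (fun i => 48 * INR N / (48 * INR N + (INR (N / 2 - 1) - INR i) ^ 2)) (N / 2 - 1)
  + INR (N / 2 - 1) * / 64 ^ (N / 48) <= 62 * sqrt (INR N).
Proof.
  intros HN. pose proof (nat_div_bounds N 2 ltac:(lia)). pose proof (nat_div_bounds N 48 ltac:(lia)).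
  assert (HN20 : 20 <= INR N) by (replace 20 with (INR 20) by (simpl; ring); apply le_INR; lia).
  set (s := sqrt (48 * INR N)).
  assert (Hs2 : s ^ 2 = 48 * INR N) by (unfold s; rewrite pow2_sqrt; lra).
  assert (Hs : s <= 7 * sqrt (INR N)).
  { unfold s. replace 7 with (sqrt (7 * 7)) by (apply sqrt_square; lra).
    rewrite <- sqrt_mult_alt by lra. apply sqrt_le_1_alt. lra. }
  assert (Hs2' : 2 <= s) by (rewrite <- (sqrt_square 2) by lra; apply sqrt_le_1_alt; lra).
  assert (Hsum : rsum (fun i => 48 * INR N / (48 * INR N + (INR (N / 2 - 1) - INR i) ^ 2)) (N / 2 - 1)
                 <= 2 * s) by (rewrite <- Hs2; apply sum_lorentzian_le, Hs2').
  assert (Htail : INR (N / 2 - 1) * / 64 ^ (N / 48) <= 48).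
  { assert (H64 : 1 + INR (N / 48) * 63 <= 64 ^ (N / 48))
      by (replace 64 with (1 + 63) by ring; apply Rle_pow_lin; lra).
    assert (INR (N / 2 - 1) <= 48 * (INR (N / 48) + 1))
      by (rewrite <- S_INR; replace 48 with (INR 48) by (simpl; ring); rewrite <- mult_INR;
          apply le_INR; lia).
    pose proof (pos_INR (N / 48)).
    apply (Rmult_le_reg_r (64 ^ (N / 48))); [lra|].
    rewrite Rmult_assoc, Rinv_l by lra. nra. }
  assert (1 <= sqrt (INR N)) by (rewrite <- sqrt_1; apply sqrt_le_1_alt; lra).
  lra.
Qed.

Lemma mul_sqrt_le_Rpower x e : 1 <= x -> 3 / 2 <= e -> x * sqrt x <= Rpower x e.
Proof.
  intros Hx He. rewrite <- (Rpower_1 x) at 1 by lra. rewrite <- Rpower_sqrt by lra.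
  rewrite <- Rpower_plus. apply Rle_Rpower; lra.
Qed.

Theorem proposition4p2 (m : Z) (alpha : R) (Halpha : 1/2 < alpha < 2/3) :
  exists (K : R) (N0 : nat), forall N : nat, (2 <= N)%nat -> (N0 <= N)%nat ->
    Cmod (LHS N m) <= K * (Rpower (INR N) (3 * alpha) * FN N).
Proof.
  exists (496 * (5 + Rabs (IZR m))), 20%nat. intros N _ HN.
  assert (HN1 : 1 <= INR N) by (apply (le_INR 1); lia).
  assert (HFN : 0 < FN N) by (apply FN_pos; lia).
  pose proof (Rabs_pos (IZR m)).
  assert (HC : 0 <= 8 * (5 + Rabs (IZR m)) * INR N * FN N).
  { apply Rmult_le_pos; [|lra]. apply Rmult_le_pos; lra. }
  eapply Rle_trans; [apply LHS_le_sum; lia|].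
  eapply Rle_trans; [apply Rmult_le_compat_l; [exact HC| apply LHS_sum_factor_le; lia]|].
  pose proof (mul_sqrt_le_Rpower (INR N) (3 * alpha) HN1 ltac:(lra)).
  replace (8 * (5 + Rabs (IZR m)) * INR N * FN N * (62 * sqrt (INR N)))
    with (496 * (5 + Rabs (IZR m)) * (INR N * sqrt (INR N) * FN N)) by ring.
  apply Rmult_le_compat_l; [lra|]. apply Rmult_le_compat_r; lra.
Qed.
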